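(* Let $L\ge1$, $N=4^L$, and positive integers $M,r_0,\ldots,r_{L-1}$. For weights $\mathbf{a}^{0,\gamma}\in\mathbb{R}^M$ ($\gamma\in[r_0]$), $\mathbf{a}^{l,\gamma}\in\mathbb{R}^{r_{l-1}}$ ($l\in[L-1]$, $\gamma\in[r_l]$) and $\mathbf{a}^{L,y}\in\mathbb{R}^{r_{L-1}}$, define $\phi^{0,\gamma}:=\mathbf{a}^{0,\gamma}$, $$\phi^{l,\gamma}:=\sum_{\alpha=1}^{r_{l-1}}a^{l,\gamma}_\alpha\cdot\phi^{l-1,\alpha}\otimes\phi^{l-1,\alpha}\otimes\phi^{l-1,\alpha}\otimes\phi^{l-1,\alpha}\quad(l\in[L-1],\ \gamma\in[r_l]),$$ $$\mathcal{A}^y:=\sum_{\alpha=1}^{r_{L-1}}a^{L,y}_\alpha\cdot\phi^{L-1,\alpha}\otimes\phi^{L-1,\alpha}\otimes\phi^{L-1,\alpha}\otimes\phi^{L-1,\alpha},$$ a tensor of order $N$ with dimension $M$ in each mode. Let $(I,J)$ be a partition of $[N]$ and for $l\in\{0,\ldots,L-1\}$, $k\in[N/4^l]$ set $I_{l,k}:=\{i-(k-1)4^l: i\in I\}\cap[4^l]$ and $J_{l,k}:=\{j-(k-1)4^l:j\in J\}\cap[4^l]$. Then the maximum of $\operatorname{rank}[\![\mathcal{A}^y]\!]_{I,J}$ over all choices of the weights is: (i) no smaller than $\min\{r_0,M\}^S$, where $S:=|\{k\in[N/4]: I_{1,k}\neq\emptyset\text{ and }J_{1,k}\neq\emptyset\}|$;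 (ii) no greater than $\min\{M^{\min\{|I|,|J|\}},\ r_{L-1}\prod_{t=1}^4 c^{L-1,t}\}$, where $c^{0,k}:=1$ for $k\in[N]$ and $c^{l,k}:=\min\{M^{\min\{|I_{l,k}|,|J_{l,k}|\}},\ r_{l-1}\prod_{t=1}^4 c^{l-1,4(k-1)+t}\}$ for $l\in[L-1]$, $k\in[N/4^l]$.
   Context: $[n]=\{1,\ldots,n\}$. Tensor product: for tensors $\mathcal{A}$ of order $P$ and $\mathcal{B}$ of order $Q$, $(\mathcal{A}\otimes\mathcal{B})_{d_1\ldots d_{P+Q}}=\mathcal{A}_{d_1\ldots d_P}\mathcal{B}_{d_{P+1}\ldots d_{P+Q}}$; $a^{l,\gamma}_\alpha$ denotes entry $\alpha$ of $\mathbf{a}^{l,\gamma}$. Matricization: for a tensor $\mathcal{A}$ of order $N$ with dimension $M$ in each mode and a partition $(I,J)$ of $[N]$ (disjoint, union $[N]$) with $I=\{i_1<\cdots<i_{|I|}\}$, $J=\{j_1<\cdots<j_{|J|}\}$, $[\![\mathcal{A}]\!]_{I,J}$ is the $M^{|I|}\times M^{|J|}$ matrix holding $\mathcal{A}_{d_1\ldots d_N}$ in row $1+\sum_{t}(d_{i_t}-1)M^{|I|-t}$ and column $1+\sum_t(d_{j_t}-1)M^{|J|-t}$ (a row or column vector if $I$ or $J$ is empty). The tensor $\mathcal{A}^y$ is the coefficient tensor realized by output $y$ of a deep convolutional arithmetic circuit with size-4 pooling windows. *)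

From HB Require Import structures.
From mathcomp Require Import all_boot all_order all_algebra.
From mathcomp Require Import zify.
From mathcomp Require Import reals.
Set Implicit Arguments. Unset Strict Implicit. Unset Printing Implicit Defensive.
Import Order.TTheory GRing.Theory Num.Theory.
Local Open Scope ring_scope.

(* Indices are 0-based: mode i of an order-n tensor is i : 'I_n, an index
   value d_i lies in 'I_M (value d_i - 1 in the paper's 1-based convention). *)

Definition tensor (R : Type) (M n : nat) := {ffun 'I_n -> 'I_M} -> R.

Lemma blk_lt (l : nat) (t : 'I_4) (j : 'I_(4 ^ l)) : (t * 4 ^ l + j < 4 ^ l.+1)%N.
Proof.
rewrite expnS; have := ltn_ord t; have := ltn_ord j.
move: (nat_of_ord t) (nat_of_ord j) => a b; move: (4 ^ l)%N => x; nia.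
Qed.

Definition blk_ord (l : nat) (t : 'I_4) (j : 'I_(4 ^ l)) : 'I_(4 ^ l.+1) :=
  Ordinal (blk_lt t j).

Definition block (M l : nat) (d : {ffun 'I_(4 ^ l.+1) -> 'I_M}) (t : 'I_4)
  : {ffun 'I_(4 ^ l) -> 'I_M} := [ffun j => d (blk_ord t j)].

(* One layer: sum_alpha w_alpha . phi^alpha (x) phi^alpha (x) phi^alpha (x) phi^alpha,
   where (A (x) B)_{d_1..d_{P+Q}} = A_{d_1..d_P} B_{d_{P+1}..d_{P+Q}}, so the
   fourfold tensor power evaluates to the product over the 4 consecutive blocks. *)
Definition layer (R : realType) (M l rr : nat) (w : 'I_rr -> R)
  (phi : 'I_rr -> tensor R M (4 ^ l)) : tensor R M (4 ^ l.+1) :=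
  fun d => \sum_(alpha < rr) w alpha * \prod_(t < 4) phi alpha (block d t).

Definition ord0_pow0 : 'I_(4 ^ 0) := @Ordinal (4 ^ 0) 0 isT.

(* phi^{l,gamma}; a0 gamma = a^{0,gamma} in R^M, a l gamma = a^{l,gamma} in R^{r_{l-1}} *)
Fixpoint phi (R : realType) (M : nat) (r : nat -> nat)
  (a0 : 'I_(r 0%N) -> 'I_M -> R) (a : forall l : nat, 'I_(r l) -> 'I_(r l.-1) -> R)
  (l : nat) : 'I_(r l) -> tensor R M (4 ^ l) :=
  match l return 'I_(r l) -> tensor R M (4 ^ l) with
  | 0 => fun g d => a0 g (d ord0_pow0)
  | l'.+1 => fun g => layer (a l'.+1 g) (@phi R M r a0 a l')
  end.

(* A^y, with aL = a^{L,y} in R^{r_{L-1}} (meaningful for L >= 1) *)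
Definition Atensor (R : realType) (M : nat) (r : nat -> nat)
  (a0 : 'I_(r 0%N) -> 'I_M -> R) (a : forall l : nat, 'I_(r l) -> 'I_(r l.-1) -> R)
  (L : nat) (aL : 'I_(r L.-1) -> R) : tensor R M (4 ^ L) :=
  (match L return ('I_(r L.-1) -> R) -> tensor R M (4 ^ L) with
   | 0 => fun _ _ => 0
   | L'.+1 => fun w => layer w (@phi R M r a0 a L')
   end) aL.

Definition posn (n : nat) (I : {set 'I_n}) (i : 'I_n) : nat :=
  #|[set i' in I | (i' < i)%N]|.

Definition digit (M : nat) (HM : (0 < M)%N) (rho e : nat) : 'I_M :=
  Ordinal (ltn_pmod (rho %/ M ^ e) HM).

(* Matricization [[A]]_{I,J}: entry A_{d_1..d_N} sits in row
   sum_t d_{i_t} M^{|I|-t} and column sum_t d_{j_t} M^{|J|-t} (0-based). *)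
Definition matricize (R : realType) (M n : nat) (HM : (0 < M)%N)
  (I J : {set 'I_n}) (A : tensor R M n) : 'M[R]_(M ^ #|I|, M ^ #|J|) :=
  \matrix_(rho, kappa) A [ffun i : 'I_n =>
     if i \in I then digit HM rho (#|I| - 1 - posn I i)
     else digit HM kappa (#|J| - 1 - posn J i)].

(* I_{l,k} = {i - (k-1)4^l : i in I} cap [4^l], with k 0-based here *)
Definition Ilk (n : nat) (I : {set 'I_n}) (l k : nat) : {set 'I_(4 ^ l)} :=
  [set j : 'I_(4 ^ l) | [exists i in I, nat_of_ord i == (k * 4 ^ l + j)%N]].

(* c^{l,k} (k 0-based): c^{0,k} = 1,
   c^{l,k} = min(M^{min(|I_{l,k}|,|J_{l,k}|)}, r_{l-1} prod_t c^{l-1,4k+t}) *)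
Fixpoint cbound (n M : nat) (r : nat -> nat) (I J : {set 'I_n}) (l k : nat) : nat :=
  match l with
  | 0 => 1%N
  | l'.+1 => minn (M ^ minn #|Ilk I l'.+1 k| #|Ilk J l'.+1 k|)
                  (r l' * \prod_(t < 4) cbound M r I J l' (4 * k + t))%N
  end.

(* Call a tensor (P, Q)-separable in m terms if it is a sum of m
   products f_k g_k with f_k depending only on the modes in P and g_k only on
   those in Q.  The matricization [[T]]_{I,J} of an (I, J)-separable tensor
   factors through m columns, so its rank is at most m.  Separability survives
   sums, scalings and products, and every tensor is separable in
   M^min(|P|,|Q|) terms (expand along the modes of the smaller side); hence by
   induction on l each phi^{l,gamma} is (I_{l,k}, J_{l,k})-separable in c^{l,k}
   terms, and one more layer bounds A^y.

   Take a^{0,gamma} = e_gamma, all-ones weights on layer 1 and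
   e_1 on every later layer.  Then A^y is the indicator of the indices that
   are constant on each window of four consecutive modes, with value below r_0.
   Label each window meeting both I and J by a value below min(r_0, M); the
   row whose I-modes carry the labelling q and the column whose J-modes carry
   q' meet in an entry equal to [q = q'], so [[A^y]]_{I,J} contains an
   identity submatrix of size min(r_0, M)^S. *)

From mathcomp Require Import all_boot all_order all_algebra.
From mathcomp Require Import zify.
From mathcomp Require Import reals.
Set Implicit Arguments. Unset Strict Implicit. Unset Printing Implicit Defensive.
Import Order.TTheory GRing.Theory Num.Theory.
Local Open Scope ring_scope.

Section Separable.
Variables (R : comPzRingType) (M n : nat).
Implicit Types (P Q : {set 'I_n}) (T : tensor R M n).

Definition dep_on P T :=
  forall d d' : {ffun 'I_n -> 'I_M}, {in P, d =1 d'} -> T d = T d'.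

Definition separable P Q T (m : nat) :=
  exists (K : finType) (f g : K -> tensor R M n), [/\ (#|K| <= m)%N,
    forall k, dep_on P (f k), forall k, dep_on Q (g k) &
    forall d, T d = \sum_k f k d * g k d].

Lemma separable_ext P Q T T' m :
  T =1 T' -> separable P Q T m -> separable P Q T' m.
Proof.
move=> eqT [K [f [g [cardK fP gQ defT]]]]; exists K, f, g; split=> // d.
by rewrite -eqT defT.
Qed.

Lemma separable_min P Q T m1 m2 :
  separable P Q T m1 -> separable P Q T m2 -> separable P Q T (minn m1 m2).
Proof. by rewrite /minn; case: ltnP. Qed.

Lemma separable_sym P Q T m : separable P Q T m -> separable Q P T m.
Proof.
move=> [K [f [g [cardK fP gQ defT]]]]; exists K, g, f; split=> // d.
by rewrite defT; apply: eq_bigr => k _; rewrite mulrC.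
Qed.

Lemma dep_onS P P' T : P \subset P' -> dep_on P T -> dep_on P' T.
Proof. by move=> /subsetP sPP' TP d d' eq_dd'; apply: TP => i /sPP'/eq_dd'. Qed.

Lemma separableS P Q P' Q' T m :
  P \subset P' -> Q \subset Q' -> separable P Q T m -> separable P' Q' T m.
Proof.
move=> sPP' sQQ' [K [f [g [cardK fP gQ defT]]]]; exists K, f, g.
by split=> // k; [apply: dep_onS (fP k) | apply: dep_onS (gQ k)].
Qed.

Lemma separable_dep_on P Q T : dep_on P T -> separable P Q T 1.
Proof.
move=> TP; exists unit, (fun=> T), (fun _ _ => 1); split=> //.
  by rewrite card_unit.
by move=> d; rewrite (big_pred1 tt) ?mulr1 // => -[].
Qed.

Lemma separable0 P Q : separable P Q (fun=> 0) 0.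
Proof.
exists void, (fun _ _ => 0), (fun _ _ => 0); split=> //; first by rewrite card_void.
by move=> d; rewrite big_pred0 // => -[].
Qed.

Lemma separable1 P Q : separable P Q (fun=> 1) 1.
Proof. exact: separable_dep_on. Qed.

Lemma separableD P Q T1 T2 m1 m2 :
  separable P Q T1 m1 -> separable P Q T2 m2 ->
  separable P Q (fun d => T1 d + T2 d) (m1 + m2).
Proof.
move=> [K1 [f1 [g1 [cardK1 f1P g1Q defT1]]]] [K2 [f2 [g2 [cardK2 f2P g2Q defT2]]]].
exists (K1 + K2)%type, (fun k => match k with inl k1 => f1 k1 | inr k2 => f2 k2 end),
  (fun k => match k with inl k1 => g1 k1 | inr k2 => g2 k2 end); split.
- by rewrite card_sum leq_add.
- by case.
- by case.
- by move=> d; rewrite big_sumType defT1 defT2.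
Qed.

Lemma separableZ P Q T m (c : R) :
  separable P Q T m -> separable P Q (fun d => c * T d) m.
Proof.
move=> [K [f [g [cardK fP gQ defT]]]].
exists K, (fun k d => c * f k d), g; split=> //.
  by move=> k d d' eq_dd'; rewrite (fP k d d' eq_dd').
by move=> d; rewrite defT mulr_sumr; apply: eq_bigr => k _; rewrite mulrA.
Qed.

Lemma separableM P Q T1 T2 m1 m2 :
  separable P Q T1 m1 -> separable P Q T2 m2 ->
  separable P Q (fun d => T1 d * T2 d) (m1 * m2).
Proof.
move=> [K1 [f1 [g1 [cardK1 f1P g1Q defT1]]]] [K2 [f2 [g2 [cardK2 f2P g2Q defT2]]]].
exists (K1 * K2)%type, (fun k d => f1 k.1 d * f2 k.2 d),
  (fun k d => g1 k.1 d * g2 k.2 d); split.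
- by rewrite card_prod leq_mul.
- by move=> k d d' eq_dd'; rewrite (f1P _ d d' eq_dd') (f2P _ d d' eq_dd').
- by move=> k d d' eq_dd'; rewrite (g1Q _ d d' eq_dd') (g2Q _ d d' eq_dd').
- move=> d; rewrite defT1 defT2 big_distrlr pair_big /=.
  by apply: eq_bigr => k _; rewrite mulrACA.
Qed.

Lemma separable_sum P Q (I : finType) (F : I -> tensor R M n) m :
  (forall i, separable P Q (F i) m) ->
  separable P Q (fun d => \sum_i F i d) (#|I| * m).
Proof.
move=> FPQ; rewrite cardT.
apply: (@separable_ext _ _ (fun d => \sum_(i <- enum I) F i d)) => [d|].
  by rewrite big_enum.
elim: (enum I) => [|i s IHs] /=.
  by apply: separable_ext (separable0 P Q) => d; rewrite big_nil.
by apply: separable_ext (separableD (FPQ i) IHs) => d; rewrite big_cons.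
Qed.

Lemma separable_prod P Q (I : finType) (F : I -> tensor R M n) (m : I -> nat) :
  (forall i, separable P Q (F i) (m i)) ->
  separable P Q (fun d => \prod_i F i d) (\prod_i m i)%N.
Proof.
move=> FPQ; rewrite -big_enum.
apply: (@separable_ext _ _ (fun d => \prod_(i <- enum I) F i d)) => [d|].
  by rewrite big_enum.
elim: (enum I) => [|i s IHs] /=.
  by rewrite big_nil; apply: separable_ext (separable1 P Q) => d; rewrite big_nil.
by rewrite big_cons; apply: separable_ext (separableM (FPQ i) IHs) => d; rewrite big_cons.
Qed.

Definition fset_at (d : {ffun 'I_n -> 'I_M}) (i : 'I_n) (v : 'I_M) :
  {ffun 'I_n -> 'I_M} := [ffun j => if j == i then v else d j].

Lemma fset_at_id d i : fset_at d i (d i) = d.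
Proof. by apply/ffunP => j; rewrite ffunE; case: eqP => // ->. Qed.

(* Expand along one mode at a time: T d = \sum_v [d i = v] T (d with d i := v). *)
Lemma separable_modes T (s : seq 'I_n) :
  separable [set i in s] (~: [set i in s]) T (M ^ size s).
Proof.
elim: s => [|i s [K [f [g [cardK fP gQ defT]]]]].
  apply: separable_sym; apply: separable_dep_on => d d' eq_dd'.
  by congr T; apply/ffunP => j; apply: eq_dd'; rewrite !inE.
exists (K * 'I_M)%type, (fun k d => f k.1 d * (d i == k.2)%:R),
  (fun k d => g k.1 (fset_at d i k.2)); split.
- by rewrite card_prod card_ord expnS mulnC leq_mul.
- move=> [k v] d d' eq_dd' /=; rewrite eq_dd' ?inE ?eqxx //.
  by congr (_ * _); apply: fP => j; rewrite inE => sj; apply: eq_dd'; rewrite !inE sj orbT.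
- move=> [k v] d d' eq_dd' /=; apply: gQ => j; rewrite !inE !ffunE => sj.
  by case: eqP => // /eqP ji; apply: eq_dd'; rewrite !inE negb_or ji.
- move=> d; rewrite defT -(pair_bigA _ (fun k v => f k d * (d i == v)%:R * g k (fset_at d i v))).
  apply: eq_bigr => k _ /=; rewrite (bigD1 (d i)) //= eqxx mulr1 fset_at_id big1 ?addr0 //.
  by move=> v /negbTE; rewrite eq_sym => ->; rewrite mulr0 mul0r.
Qed.

Lemma separable_card P Q T :
  P :|: Q = [set: 'I_n] -> separable P Q T (M ^ minn #|P| #|Q|).
Proof.
have sepP P' Q' : P' :|: Q' = [set: 'I_n] -> separable P' Q' T (M ^ #|P'|).
  move=> covPQ; rewrite cardE; apply: separableS (separable_modes T (enum P')).
    by apply/subsetP => i; rewrite inE mem_enum.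
  apply/subsetP => i; rewrite !inE mem_enum => P'i.
  by move/setP/(_ i): covPQ; rewrite !inE (negbTE P'i).
move=> covPQ; rewrite /minn; case: ltnP => _; first exact: sepP.
by apply/separable_sym/sepP; rewrite setUC.
Qed.

End Separable.

Section Matricization.
Variables (R : realType) (M n : nat) (HM : (0 < M)%N) (I J : {set 'I_n}).

Definition mx_index (rho : 'I_(M ^ #|I|)) (kappa : 'I_(M ^ #|J|)) : {ffun 'I_n -> 'I_M} :=
  [ffun i => if i \in I then digit HM rho (#|I| - 1 - posn I i)
             else digit HM kappa (#|J| - 1 - posn J i)].

Lemma matricizeE (A : tensor R M n) rho kappa :
  matricize HM I J A rho kappa = A (mx_index rho kappa).
Proof. by rewrite mxE. Qed.

Lemma rank_matricize_separable (A : tensor R M n) m :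
  [disjoint I & J] -> separable I J A m -> (\rank (matricize HM I J A) <= m)%N.
Proof.
move=> disjIJ [K [f [g [cardK fI gJ defA]]]].
have [rho0 kappa0] : 'I_(M ^ #|I|) * 'I_(M ^ #|J|).
  by split; apply: Ordinal (_ : 0 < _)%N; rewrite expn_gt0 HM.
pose B : 'M[R]_(M ^ #|I|, #|K|) :=
  \matrix_(rho, k) f (enum_val k) (mx_index rho kappa0).
pose C : 'M[R]_(#|K|, M ^ #|J|) :=
  \matrix_(k, kappa) g (enum_val k) (mx_index rho0 kappa).
suff -> : matricize HM I J A = B *m C.
  by apply: leq_trans (mxrankM_maxl _ _) _; apply: leq_trans (rank_leq_col _) cardK.
apply/matrixP => rho kappa; rewrite matricizeE defA mxE.
under [RHS]eq_bigr => k _ do rewrite !mxE.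
rewrite (big_enum_val (fun k => f k _ * g k _)).
apply: eq_bigr => k _; congr (_ * _).
  by apply: fI => i Ii; rewrite !ffunE Ii.
by apply: gJ => j Jj; rewrite !ffunE (disjointFl disjIJ Jj).
Qed.

End Matricization.

Lemma separable_block (R : comPzRingType) M l (t : 'I_4) (P Q : {set 'I_(4 ^ l.+1)})
  (P' Q' : {set 'I_(4 ^ l)}) (U : tensor R M (4 ^ l)) m :
  {in P', forall j, blk_ord t j \in P} -> {in Q', forall j, blk_ord t j \in Q} ->
  separable P' Q' U m -> separable P Q (fun d => U (block d t)) m.
Proof.
move=> P'P Q'Q [K [f [g [cardK fP' gQ' defU]]]].
exists K, (fun k d => f k (block d t)), (fun k d => g k (block d t)); split=> //.
- by move=> k d d' eq_dd'; apply: fP' => j /P'P Pj; rewrite !ffunE eq_dd'.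
- by move=> k d d' eq_dd'; apply: gQ' => j /Q'Q Qj; rewrite !ffunE eq_dd'.
Qed.

Lemma separable_layer (R : realType) M l rr (w : 'I_rr -> R)
  (U : 'I_rr -> tensor R M (4 ^ l)) (P Q : {set 'I_(4 ^ l.+1)})
  (P' Q' : 'I_4 -> {set 'I_(4 ^ l)}) (m : 'I_4 -> nat) :
  (forall t, {in P' t, forall j, blk_ord t j \in P}) ->
  (forall t, {in Q' t, forall j, blk_ord t j \in Q}) ->
  (forall alpha t, separable (P' t) (Q' t) (U alpha) (m t)) ->
  separable P Q (layer w U) (rr * \prod_(t < 4) m t).
Proof.
move=> P'P Q'Q sepU.
suff: separable P Q (layer w U) (#|'I_rr| * \prod_(t < 4) m t) by rewrite card_ord.
apply: separable_sum => alpha; apply: separableZ.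
apply: separable_prod => t; exact: separable_block (P'P t) (Q'Q t) (sepU alpha t).
Qed.

Lemma Ilk_cover L (I J : {set 'I_(4 ^ L)}) l k :
  I :|: J = [set: 'I_(4 ^ L)] -> (k.+1 * 4 ^ l <= 4 ^ L)%N ->
  Ilk I l k :|: Ilk J l k = [set: 'I_(4 ^ l)].
Proof.
move=> covIJ le_k; apply/setP => j; rewrite !inE.
have lt_i : (k * 4 ^ l + j < 4 ^ L)%N.
  by apply: leq_trans le_k; rewrite mulSn addnC ltn_add2r.
move/setP/(_ (Ordinal lt_i)): covIJ; rewrite !inE => /orP[Ii|Ji]; apply/orP.
  by left; apply/existsP; exists (Ordinal lt_i); rewrite Ii /=.
by right; apply/existsP; exists (Ordinal lt_i); rewrite Ji /=.
Qed.

Lemma Ilk_blk_ord L (I : {set 'I_(4 ^ L)}) l k (t : 'I_4) :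
  {in Ilk I l (4 * k + t), forall j, blk_ord t j \in Ilk I l.+1 k}.
Proof.
move=> j; rewrite !inE => /existsP[i /andP[Ii /eqP eq_ij]].
apply/existsP; exists i; rewrite Ii eq_ij /= expnS.
apply/eqP; nia.
Qed.

Lemma Ilk_top_blk_ord L (I : {set 'I_(4 ^ L.+1)}) (t : 'I_4) :
  {in Ilk I L t, forall j, blk_ord t j \in I}.
Proof.
move=> j; rewrite !inE => /existsP[i /andP[Ii /eqP eq_ij]].
by have -> : blk_ord t j = i by apply: val_inj; rewrite /= eq_ij.
Qed.

Section UpperBound.
Variables (R : realType) (L M : nat) (r : nat -> nat) (I J : {set 'I_(4 ^ L)}).
Variables (a0 : 'I_(r 0%N) -> 'I_M -> R) (a : forall l, 'I_(r l) -> 'I_(r l.-1) -> R).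
Hypothesis covIJ : I :|: J = [set: 'I_(4 ^ L)].

Lemma separable_phi l k (g : 'I_(r l)) : (k.+1 * 4 ^ l <= 4 ^ L)%N ->
  separable (Ilk I l k) (Ilk J l k) (phi a0 a g) (cbound M r I J l k).
Proof.
elim: l k g => [|l IHl] k g le_k /=.
  have /setP/(_ ord0_pow0) := Ilk_cover covIJ le_k; rewrite in_setT in_setU => /orP[Ik|Jk].
    by apply: separable_dep_on => d d' eq_dd'; rewrite eq_dd'.
  by apply/separable_sym/separable_dep_on => d d' eq_dd'; rewrite eq_dd'.
apply: separable_min; first exact/separable_card/Ilk_cover.
apply: (@separable_layer _ _ _ _ _ _ _ _ (fun t => Ilk I l (4 * k + t))
                                         (fun t => Ilk J l (4 * k + t))) => [t|t|alpha t].
- exact: Ilk_blk_ord.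
- exact: Ilk_blk_ord.
- apply: IHl; apply: leq_trans le_k; rewrite expnS; have := ltn_ord t.
  move: (nat_of_ord t) (4 ^ l)%N => y x; nia.
Qed.

End UpperBound.

Lemma rank_matricize_Atensor_leq (R : realType) (L M : nat) (r : nat -> nat)
  (HM : (0 < M)%N) (I J : {set 'I_(4 ^ L)}) (a0 : 'I_(r 0%N) -> 'I_M -> R)
  (a : forall l, 'I_(r l) -> 'I_(r l.-1) -> R) (aL : 'I_(r L.-1) -> R) :
  (1 <= L)%N -> [disjoint I & J] -> I :|: J = [set: 'I_(4 ^ L)] ->
  (\rank (matricize HM I J (Atensor a0 a aL)) <=
   minn (M ^ minn #|I| #|J|) (r L.-1 * \prod_(t < 4) cbound M r I J L.-1 t))%N.
Proof.
move=> L_gt0 disjIJ covIJ; rewrite leq_min; apply/andP; split.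
  by apply: rank_matricize_separable => //; apply: separable_card.
apply: rank_matricize_separable => //.
case: L L_gt0 I J a0 a aL covIJ disjIJ => // L _ I J a0 a aL covIJ _ /=.
apply: (@separable_layer _ _ _ _ _ _ _ _ (Ilk I L) (Ilk J L)) => [t|t|alpha t].
- exact: Ilk_top_blk_ord.
- exact: Ilk_top_blk_ord.
- apply: separable_phi => //; rewrite expnS; have := ltn_ord t.
  move: (nat_of_ord t) (4 ^ L)%N => y x; nia.
Qed.

Section Digits.
Variables (M : nat) (HM : (0 < M)%N).

Lemma digit_inj k a b : (a < M ^ k)%N -> (b < M ^ k)%N ->
  (forall e, (e < k)%N -> digit HM a e = digit HM b e) -> a = b.
Proof.
elim: k a b => [|k IHk] a b; first by rewrite expn0 !ltnS !leqn0 => /eqP-> /eqP->.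
rewrite expnSr -!ltn_divLR // => lt_a lt_b eq_ab.
rewrite (divn_eq a M) (divn_eq b M); congr (_ * _ + _)%N.
  apply: IHk => // e lt_e; apply: val_inj.
  by have /(congr1 val) := eq_ab e.+1 lt_e; rewrite /= expnS !divnMA.
by have /(congr1 val) := eq_ab 0%N isT; rewrite /= expn0 !divn1.
Qed.

Lemma digits_onto k (y : 'I_k -> 'I_M) :
  exists rho : 'I_(M ^ k), forall e : 'I_k, digit HM rho e = y e.
Proof.
pose digits (rho : 'I_(M ^ k)) := [ffun e : 'I_k => digit HM rho e].
have inj_digits : injective digits.
  move=> rho rho' /ffunP eq_rho; apply/val_inj/(digit_inj (ltn_ord _) (ltn_ord _)).
  by move=> e lt_e; have := eq_rho (Ordinal lt_e); rewrite !ffunE.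
have le_card : (#|{ffun 'I_k -> 'I_M}| <= #|'I_(M ^ k)|)%N.
  by rewrite card_ffun !card_ord.
have /codomP[rho /ffunP eq_y] := inj_card_onto inj_digits le_card [ffun e => y e].
by exists rho => e; have := eq_y e; rewrite !ffunE.
Qed.

End Digits.

Section Positions.
Variables (n : nat) (I : {set 'I_n}).

Lemma posn_lt i : i \in I -> (posn I i < #|I|)%N.
Proof.
move=> Ii; apply/proper_card/properP; split; first by apply/subsetP => x /setIdP[].
by exists i; rewrite ?inE ?ltnn ?andbF.
Qed.

Lemma posn_mono (i i' : 'I_n) : i \in I -> (i < i')%N -> (posn I i < posn I i')%N.
Proof.
move=> Ii lt_ii'; apply/proper_card/properP; split.
  by apply/subsetP => x; rewrite !inE => /andP[-> /ltn_trans->].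
by exists i; rewrite !inE ?Ii ?lt_ii' ?ltnn ?andbF.
Qed.

Lemma posn_inj : {in I &, injective (posn I)}.
Proof.
move=> i i' Ii Ii' eq_posn; apply: val_inj.
case: (ltngtP i i') => // [/(posn_mono Ii)|/(posn_mono Ii')]; by rewrite eq_posn ltnn.
Qed.

Lemma exists_row_index M (HM : (0 < M)%N) (x : 'I_n -> 'I_M) :
  exists rho : 'I_(M ^ #|I|), {in I, forall i, digit HM rho (#|I| - 1 - posn I i) = x i}.
Proof.
pose y (e : 'I_#|I|) :=
  if [pick i in I | (#|I| - 1 - posn I i == e)%N] is Some i then x i else Ordinal HM.
have [rho rhoP] := digits_onto HM y.
exists rho => i Ii; have lt_i : (#|I| - 1 - posn I i < #|I|)%N.
  by have := posn_lt Ii; lia.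
rewrite (rhoP (Ordinal lt_i)) /y; case: pickP => [i' /andP[Ii' /eqP /= eq_i]|/(_ i)].
  congr x; apply: posn_inj => //; move: eq_i (posn_lt Ii) (posn_lt Ii').
  by move: #|I| (posn I i) (posn I i') => c p p'; lia.
by rewrite Ii eqxx.
Qed.

End Positions.

Lemma mx_index_eq (M n : nat) (HM : (0 < M)%N) (I J : {set 'I_n})
  (rho : 'I_(M ^ #|I|)) (kappa : 'I_(M ^ #|J|)) (x : {ffun 'I_n -> 'I_M}) :
  I :|: J = [set: 'I_n] ->
  {in I, forall i, digit HM rho (#|I| - 1 - posn I i) = x i} ->
  {in J, forall j, digit HM kappa (#|J| - 1 - posn J j) = x j} ->
  mx_index HM rho kappa = x.
Proof.
move=> /setP covIJ rhoP kappaP; apply/ffunP => i; rewrite ffunE.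
case: ifPn => [/rhoP //|notIi]; apply: kappaP.
by move: (covIJ i); rewrite !inE (negbTE notIi).
Qed.

Lemma mxrank_mxsub (F : fieldType) m n m' n' (f : 'I_m' -> 'I_m) (g : 'I_n' -> 'I_n)
  (A : 'M[F]_(m, n)) : (\rank (mxsub f g A) <= \rank A)%N.
Proof.
have -> : mxsub f g A = rowsub f 1%:M *m (A *m colsub g 1%:M).
  by rewrite mulmx_colsub mulmx1 -mxsub_mul mul1mx.
by apply: leq_trans (mxrankM_maxr _ _) _; apply: mxrankM_maxl.
Qed.

Lemma prodr_bool (R : comPzSemiRingType) (T : finType) (b : pred T) :
  \prod_t ((b t)%:R : R) = [forall t, b t]%:R.
Proof.
case: (boolP [forall t, b t]) => [/forallP bT|]; first by rewrite big1 // => t _; rewrite bT.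
by rewrite negb_forall => /existsP[t /negbTE bNt]; rewrite (bigD1 t) //= bNt mul0r.
Qed.

Lemma sumr_bool_uniq (R : pzSemiRingType) (T : finType) (b : pred T) :
  {in b &, forall x y, x = y} -> \sum_t ((b t)%:R : R) = [exists t, b t]%:R.
Proof.
move=> b_uniq; case: (boolP [exists t, b t]) => [/existsP[t bt]|].
  rewrite (bigD1 t) //= bt big1 ?addr0 // => t' t't.
  by case bt': (b t') => //; rewrite (b_uniq _ _ bt' bt) eqxx in t't.
by rewrite negb_exists => /forallP bN; rewrite big1 // => t _; rewrite (negbTE (bN t)).
Qed.

Definition window_const (M n r0 : nat) (d : {ffun 'I_n -> 'I_M}) : bool :=
  [forall i : 'I_n, forall j : 'I_n, (i %/ 4 == j %/ 4)%N ==> (d i == d j)]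
  && [forall i, (d i < r0)%N].

Lemma blk_ord_onto l (i : 'I_(4 ^ l.+1)) : exists t j, i = blk_ord (l := l) t j.
Proof.
have lt_t : (i %/ 4 ^ l < 4)%N by rewrite ltn_divLR ?expn_gt0 // -expnS.
have lt_j : (i %% 4 ^ l < 4 ^ l)%N by rewrite ltn_pmod ?expn_gt0.
by exists (Ordinal lt_t), (Ordinal lt_j); apply: val_inj; rewrite /= -divn_eq.
Qed.

Lemma blk_ord_div4 l (t : 'I_4) (j : 'I_(4 ^ l.+1)) :
  (blk_ord t j %/ 4 = t * 4 ^ l + j %/ 4)%N.
Proof. by rewrite /=; move: (nat_of_ord j) => x; rewrite expnSr mulnA divnMDl. Qed.

Lemma window_const_block M r0 l (d : {ffun 'I_(4 ^ l.+2) -> 'I_M}) :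
  window_const r0 d = [forall t, window_const r0 (block d t)].
Proof.
have div4_lt (j : 'I_(4 ^ l.+1)) : (j %/ 4 < 4 ^ l)%N by rewrite ltn_divLR // -expnSr.
have eq_div4 (t t' : 'I_4) (j j' : 'I_(4 ^ l.+1)) :
    (blk_ord t j %/ 4 == blk_ord t' j' %/ 4)%N = (t == t') && (j %/ 4 == j' %/ 4)%N.
  rewrite !blk_ord_div4; apply/eqP/andP => [eq_tj|[/eqP-> /eqP->] //].
  have := congr1 (divn^~ (4 ^ l)%N) eq_tj; rewrite !divnMDl ?expn_gt0 //.
  rewrite (divn_small (div4_lt j)) (divn_small (div4_lt j')) !addn0 => eq_t.
  split; first exact/eqP/val_inj.
  by move: eq_tj; rewrite eq_t => /addnI->.
apply/andP/forallP => [[/forallP dC /forallP dr0] t|dC]; first apply/andP; split.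
- apply/forallP => j; apply/forallP => j'; rewrite !ffunE; apply/implyP => eq_j.
  by have /forallP/(_ (blk_ord t j'))/implyP := dC (blk_ord t j); rewrite eq_div4 eqxx; apply.
- by apply/forallP => j; rewrite ffunE.
- apply/forallP => i; apply/forallP => i'; apply/implyP.
  have [t [j ->]] := blk_ord_onto i; have [t' [j' ->]] := blk_ord_onto i'.
  rewrite eq_div4 => /andP[/eqP <- eq_j]; have /andP[/forallP dtC _] := dC t.
  by have /forallP/(_ j')/implyP := dtC j; rewrite !ffunE; apply.
- apply/forallP => i; have [t [j ->]] := blk_ord_onto i.
  by have /andP[_ /forallP/(_ j)] := dC t; rewrite ffunE.
Qed.

Lemma window_const1 M r0 (d : {ffun 'I_(4 ^ 1) -> 'I_M}) :
  window_const r0 d =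
  [exists alpha : 'I_r0, [forall t : 'I_4, d (blk_ord t ord0_pow0) == alpha :> nat]].
Proof.
have blk0_onto (i : 'I_(4 ^ 1)) : exists t, i = blk_ord t ord0_pow0.
  have [t [j ->]] := blk_ord_onto i; exists t; congr blk_ord; apply: val_inj.
  by case: j => -[].
have div4_0 (i : 'I_(4 ^ 1)) : (i %/ 4 = 0)%N by rewrite divn_small.
apply/andP/existsP => [[/forallP dC /forallP dr0]|[alpha /forallP dalpha]].
  exists (Ordinal (dr0 (blk_ord ord0 ord0_pow0))); apply/forallP => t /=.
  have /forallP/(_ (blk_ord ord0 ord0_pow0)) := dC (blk_ord t ord0_pow0).
  by rewrite !div4_0 eqxx.
have d_alpha i : nat_of_ord (d i) = alpha by have [t ->] := blk0_onto i; apply/eqP.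
split; apply/forallP => i; last by rewrite d_alpha.
by apply/forallP => i'; apply/implyP => _; apply/eqP/val_inj; rewrite /= !d_alpha.
Qed.

Section IndicatorWeights.
Variables (R : realType) (M : nat) (r : nat -> nat).

Definition delta_weights : 'I_(r 0%N) -> 'I_M -> R := fun g v => (g == v :> nat)%:R.

Definition spread_weights (l alpha : nat) : R := if l == 1%N then 1 else (alpha == 0%N)%:R.

Let phi_spread l : 'I_(r l) -> tensor R M (4 ^ l) :=
  phi delta_weights (fun l _ => spread_weights l) (l := l).

Lemma layer_spread_weights l (d : {ffun 'I_(4 ^ l.+1) -> 'I_M}) :
  (forall k, (0 < k <= l)%N -> (0 < r k)%N) ->
  layer (fun alpha => spread_weights l.+1 alpha) (@phi_spread l) d =
  (window_const (r 0%N) d)%:R.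
Proof.
elim: l d => [|l IHl] d r_gt0.
  rewrite window_const1 -sumr_bool_uniq => [|alpha beta].
    apply: eq_bigr => alpha _; rewrite /spread_weights mul1r -prodr_bool.
    by apply: eq_bigr => t _; rewrite /phi_spread /= /delta_weights ffunE eq_sym.
  move=> /forallP/(_ ord0)/eqP eq_alpha /forallP/(_ ord0)/eqP.
  by rewrite eq_alpha => /val_inj.
have r_gt0' : (0 < r l.+1)%N by apply: r_gt0; rewrite leqnn.
rewrite /layer (bigD1 (Ordinal r_gt0')) //= [X in _ + X]big1 ?addr0; last first.
  move=> alpha alpha_neq0.
  rewrite /spread_weights /=; case: eqP => [alpha0|_]; last by rewrite mul0r.
  by move: alpha_neq0; rewrite -(inj_eq val_inj) /= alpha0.
rewrite /spread_weights /= mul1r window_const_block -prodr_bool.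
apply: eq_bigr => t _; apply: IHl => k /andP[k_gt0 le_kl].
by apply: r_gt0; rewrite k_gt0 ltnW.
Qed.

Lemma Atensor_spread_weights L (d : {ffun 'I_(4 ^ L) -> 'I_M}) :
  (1 <= L)%N -> (forall l, (l < L)%N -> (0 < r l)%N) ->
  Atensor delta_weights (fun l _ => spread_weights l) (fun alpha => spread_weights L alpha) d
  =
  (window_const (r 0%N) d)%:R.
Proof.
case: L d => // L d _ r_gt0; apply: layer_spread_weights => k /andP[_ le_kL].
by apply: r_gt0.
Qed.

End IndicatorWeights.

Section LowerBound.
Variables (R : realType) (L M : nat) (r : nat -> nat) (HM : (0 < M)%N).
Variables (I J : {set 'I_(4 ^ L)}).
Hypotheses (L_gt0 : (1 <= L)%N) (r_gt0 : forall l, (l < L)%N -> (0 < r l)%N).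
Hypotheses (disjIJ : [disjoint I & J]) (covIJ : I :|: J = [set: 'I_(4 ^ L)]).

Let S := [set k : 'I_(4 ^ L %/ 4) | (Ilk I 1 k != set0) && (Ilk J 1 k != set0)].
Let m := minn (r 0%N) M.
Let mixed := {k : 'I_(4 ^ L %/ 4) | k \in S}.

Lemma window_lt (i : 'I_(4 ^ L)) : (i %/ 4 < 4 ^ L %/ 4)%N.
Proof.
rewrite ltn_divLR // divnK ?ltn_ord //.
by case: L L_gt0 i => // L' _ _; rewrite expnS dvdn_mulr.
Qed.

Definition window (i : 'I_(4 ^ L)) : 'I_(4 ^ L %/ 4) := Ordinal (window_lt i).

Lemma Ilk1_window (K : {set 'I_(4 ^ L)}) (k : 'I_(4 ^ L %/ 4)) j :
  j \in Ilk K 1 k -> exists2 i, i \in K & window i = k.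
Proof.
rewrite inE => /existsP[i /andP[Ki /eqP eq_i]]; exists i => //; apply: val_inj.
rewrite /= eq_i; have := ltn_ord j; move: (nat_of_ord j) => x lt_x.
by rewrite expn1 divnMDl // (divn_small lt_x) addn0.
Qed.

Definition pattern (q : {ffun mixed -> 'I_m}) (i : 'I_(4 ^ L)) : 'I_M :=
  if insub (window i) is Some k then widen_ord (geq_minr _ _) (q k) else Ordinal HM.

Lemma pattern_lt q i : (pattern q i < r 0%N)%N.
Proof.
rewrite /pattern; case: insub => [k|] /=; last exact: r_gt0.
exact: leq_trans (ltn_ord _) (geq_minl _ _).
Qed.

Lemma window_const_pattern (q q' : {ffun mixed -> 'I_m}) :
  window_const (r 0%N) [ffun i => if i \in I then pattern q i else pattern q' i] = (q == q').
Proof.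
apply/andP/eqP => [[/forallP constC _]|<-]; last first.
  split; apply/forallP => i; last by rewrite ffunE; case: ifP; rewrite pattern_lt.
  apply/forallP => i'; apply/implyP => eq_win; rewrite !ffunE.
  by rewrite !if_same /pattern (_ : window i = window i') //; apply/val_inj/eqP.
apply/ffunP => k; apply: val_inj.
have := valP k; rewrite inE.
case/andP=> /set0Pn[j1 /Ilk1_window[i1 Ii1 win1]] /set0Pn[j2 /Ilk1_window[i2 Ji2 win2]].
have /forallP/(_ i2)/implyP := constC i1; rewrite !ffunE Ii1 (disjointFl disjIJ Ji2).
have /eqP eq_div4 : val (window i1) = val (window i2) by rewrite win1 win2.
rewrite eq_div4 /pattern win1 win2 => /(_ isT) /eqP /(congr1 val).
by rewrite valK.
Qed.

Lemma rank_matricize_spread_weights :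
  (m ^ #|S| <= \rank (matricize HM I J
     (Atensor (@delta_weights R M r) (fun l _ => @spread_weights R l)
        (fun alpha => @spread_weights R L alpha))))%N.
Proof.
set A := matricize _ _ _ _.
pose Q := {ffun mixed -> 'I_m}.
have [row rowP] := fin_all_exists (fun q : Q => exists_row_index I HM (pattern q)).
have [col colP] := fin_all_exists (fun q : Q => exists_row_index J HM (pattern q)).
have A_row_col q q' : A (row q) (col q') = (q == q')%:R.
  rewrite matricizeE (@mx_index_eq _ _ _ _ _ _ _
    [ffun i => if i \in I then pattern q i else pattern q' i]) => // [|i Ii|j Jj].
  - by rewrite Atensor_spread_weights // window_const_pattern.
  - by rewrite ffunE Ii rowP.
  - by rewrite ffunE (disjointFl disjIJ Jj) colP.
have sub_id : mxsub (row \o enum_val) (col \o enum_val) A = 1%:M :> 'M_#|Q|.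
  by apply/matrixP => v w; rewrite [LHS]mxE A_row_col [RHS]mxE (inj_eq enum_val_inj).
have card_Q : #|Q| = (m ^ #|S|)%N by rewrite card_ffun card_ord card_sig.
by rewrite -card_Q -(mxrank1 R #|Q|) -sub_id mxrank_mxsub.
Qed.

End LowerBound.

Unset Implicit Arguments.
Set Strict Implicit.

Theorem theorem1 (R : realType) (L M : nat) (r : nat -> nat)
  (HL : (1 <= L)%N) (HM : (0 < M)%N) (Hr : forall l, (l < L)%N -> (0 < r l)%N)
  (I J : {set 'I_(4 ^ L)})
  (HIJdisj : [disjoint I & J]) (HIJcov : I :|: J = [set: 'I_(4 ^ L)]) :
  let S := #|[set k : 'I_(4 ^ L %/ 4) |
               (Ilk I 1 k != set0) && (Ilk J 1 k != set0)]| in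
  (exists (a0 : 'I_(r 0%N) -> 'I_M -> R)
          (a : forall l : nat, 'I_(r l) -> 'I_(r l.-1) -> R)
          (aL : 'I_(r L.-1) -> R),
      (minn (r 0) M ^ S <= \rank (matricize HM I J (Atensor a0 a aL)))%N)
  /\
  (forall (a0 : 'I_(r 0%N) -> 'I_M -> R)
          (a : forall l : nat, 'I_(r l) -> 'I_(r l.-1) -> R)
          (aL : 'I_(r L.-1) -> R),
      (\rank (matricize HM I J (Atensor a0 a aL)) <=
       minn (M ^ minn #|I| #|J|)
            (r L.-1 * \prod_(t < 4) cbound M r I J L.-1 t))%N).
Proof.
move=> S; split=> [|a0 a aL]; last exact: rank_matricize_Atensor_leq.
exists (@delta_weights R M r), (fun l _ => @spread_weights R l), (@spread_weights R L).
exact: rank_matricize_spread_weights.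
Qed.
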